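(* Let $G=(S,T,\pi)$ be a countable two-person win-lose game such that every set in $\mathcal{B}^1(G)$ is finite, and assume $G$ satisfies one (hence all) of: (1) $\mathcal{B}^1_{\downarrow}(G)$ is ascending-union closed; (2) $\mathcal{B}^1_{\downarrow}(G)$ contains no countable strictly ascending chain; (3) $G$ is LNG-free. Then the suprema below are attained and $$\max_{\mathbf{p}\in\Delta(S)}\inf_{\mathbf{q}\in\Delta(T)}\pi^{\mathrm{mix}}(\mathbf{p},\mathbf{q})=0=\inf_{\mathbf{q}\in\Delta(T)}\max_{\mathbf{p}\in\Delta(S)}\pi^{\mathrm{mix}}(\mathbf{p},\mathbf{q}).$$
   Context: A two-person win-lose game is $G=(S,T,\pi)$ with non-empty $S,T$ and $\pi:S\times T\to\{0,1\}$; countable means $|S|=|T|=\aleph_0$. $\Delta(X)$ is the set of probability distributions on $X$ with at most countable support; $\pi^{\mathrm{mix}}(\mathbf{p},\mathbf{q})=\sum p_sq_t\pi(s,t)$. For $s\in S$, $B_s=\{t:\pi(s,t)=1\}$, $\mathcal{B}^1(G)=\{B_s:s\in S\}$, $\mathcal{B}^1_{\downarrow}(G)=\{A\subseteq T:\exists s,\ A\subseteq B_s\}$. A family $\mathcal{F}$ is ascending-union closed if $A_i\in\mathcal{F}$ with $A_1\subset A_2\subset\cdots$ implies $\bigcup_iA_i\in\mathcal{F}$. $G$ is LNG-free if there are no sequences of distinct $s_1,s_2,\ldots\in S$ and distinct $t_1,t_2,\ldots\in T$ with $\pi(s_i,t_j)=1\iff i\ge j$. *)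

From HB Require Import structures.
From mathcomp Require Import all_boot all_order all_algebra.
From mathcomp Require Import all_classical all_reals all_analysis.
Set Implicit Arguments. Unset Strict Implicit. Unset Printing Implicit Defensive.
Import Order.TTheory GRing.Theory Num.Theory.
Local Open Scope classical_set_scope.
Local Open Scope ring_scope.

Definition countably_infinite (X : Type) : Prop :=
  exists f : nat -> X, bijective f.

Definition Dist (R : realType) (X : choiceType) : set (X -> R) :=
  [set p | (forall x, 0 <= p x) /\ countable [set x | p x != 0] /\
           (\esum_(x in [set: X]) (p x)%:E = 1)%E].

Definition pimix (R : realType) (S T : choiceType) (pi : S -> T -> bool)
  (p : S -> R) (q : T -> R) : \bar R :=
  \esum_(st in [set: S * T]) (p st.1 * q st.2 * (pi st.1 st.2)%:R)%:E.

Definition Bs (S T : Type) (pi : S -> T -> bool) (s : S) : set T :=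
  [set t | pi s t].

Definition B1down (S T : Type) (pi : S -> T -> bool) : set (set T) :=
  [set A | exists s, A `<=` Bs pi s].

Definition ascending_union_closed (T : Type) (F : set (set T)) : Prop :=
  forall A : nat -> set T, (forall i, F (A i)) -> (forall i, A i `<=` A i.+1) ->
    F (\bigcup_i A i).

Definition no_strict_ascending_chain (T : Type) (F : set (set T)) : Prop :=
  ~ exists A : nat -> set T, (forall i, F (A i)) /\ (forall i, A i `<` A i.+1).

Definition LNG_free (S T : Type) (pi : S -> T -> bool) : Prop :=
  ~ exists (s : nat -> S) (t : nat -> T),
      injective s /\ injective t /\ forall i j, pi (s i) (t j) <-> (j <= i)%N.

(* The value max_p inf_q is 0 and is attained by every p: a finite set F of
   rows carries all but e of p, and against a column t outside the finite set
   \bigcup_(s in F) B_s the strategy p wins with probability at most e.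

   The other claims only use that B^1_down(G) has no strictly ascending chain,
   to which all three hypotheses reduce since every B_s is finite.  For a fixed
   q the supremum of q(B_s) is attained: otherwise the sets lying inside rows
   whose q-mass is arbitrarily close to the supremum could always be extended
   by one point, producing a forbidden chain.  For inf_q max_s q(B_s) = 0,
   strict extension inside B^1_down(G) is well founded, and one builds by
   well-founded induction over finite families of sets a finitely supported q
   giving mass at most e to every B_s: average N layers, each layer spread over
   the one-point extensions of the sets by the support of the previous ones. *)

From HB Require Import structures.
From mathcomp Require Import all_boot all_order all_algebra.
From mathcomp Require Import all_classical all_reals all_analysis.
From mathcomp Require Import lra.
Set Implicit Arguments. Unset Strict Implicit. Unset Printing Implicit Defensive.
Import Order.TTheory GRing.Theory Num.Theory.
Local Open Scope classical_set_scope.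
Local Open Scope ring_scope.

Lemma esumZl (R : realType) (X : choiceType) (I : set X) (a : X -> \bar R) (r : R) :
  (0 <= r)%R -> (forall i, (0 <= a i)%E) ->
  (\esum_(i in I) (r%:E * a i) = r%:E * \esum_(i in I) a i)%E.
Proof.
move=> r0 a0; rewrite /esum -ereal_supZl //; last first.
  by apply/set0P; exists (\sum_(x \in set0) a x), set0 => //; exact: fsets_set0.
congr ereal_sup; apply/seteqP; split => x /=.
- move=> [A [finA AI] <-]; exists (\sum_(i \in A) a i); first by exists A.
  by rewrite !fsbig_finite // ge0_sume_distrr.
- move=> [y [A [finA AI] <-] <-]; exists A => //.
  by rewrite !fsbig_finite // ge0_sume_distrr.
Qed.

Lemma infinite_range_inj (X : Type) (f : nat -> X) :
  injective f -> infinite_set (range f).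
Proof.
move=> f_inj; rewrite (eq_finite_set (inj_card_eq (in2W f_inj))).
exact: infinite_nat.
Qed.

Lemma countably_infinite_avoid (X : Type) (U : set X) :
  countably_infinite X -> finite_set U -> exists x, ~ U x.
Proof.
move=> [f /bij_inj/infinite_range_inj f_inf] finU.
have [x [_ Ux]] := infinite_setN0 (infinite_setD f_inf finU); by exists x.
Qed.

Lemma history_choice (X : Type) (P : seq X -> X -> Prop) :
  (forall h, exists x, P h x) -> exists f : nat -> X, forall n, P (mkseq f n) (f n).
Proof.
move=> /choice[g Pg].
pose fix prefix n := if n is m.+1 then rcons (prefix m) (g (prefix m)) else [::].
exists (g \o prefix) => n; suff -> : mkseq (g \o prefix) n = prefix n by [].
by elim: n => [//|n IHn]; rewrite mkseqS IHn.
Qed.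

Lemma near_forall_finite (I : eqType) (U : Type) (F : set_system U)
    (J : set I) (P : I -> U -> Prop) {FF : Filter F} : finite_set J ->
  (forall i, J i -> \forall x \near F, P i x) ->
  \forall x \near F, forall i, J i -> P i x.
Proof.
move=> /finite_seqP[s ->]; elim: s => [|i s IHs] JP; first exact: nearW.
near=> x => j; rewrite /= inE => /orP[/eqP->|].
  by near: x; apply: JP; rewrite /= mem_head.
move: j; near: x; apply: IHs => j sj; apply: JP; by rewrite /= inE sj orbT.
Unshelve. all: by end_near.
Qed.

Section StrictChain.
Variables (X : Type) (A : nat -> set X).
Hypothesis A_strict : forall i, A i `<` A i.+1.

Lemma strict_chain_le : {homo A : i j / (i <= j)%N >-> i `<=` j}.
Proof.
apply: (homo_leq (r := @subset X)) => [B|B C D|i]; first exact: subset_refl.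
  exact: subset_trans.
by case: (A_strict i).
Qed.

Lemma strict_chain_escape (W : set X) : finite_set W -> exists i, ~ A i `<=` W.
Proof.
move=> finW; apply/not_existsP => AW.
have new i : exists x, A i.+1 x /\ ~ A i x.
  by have [_ /nonsubset[x]] := A_strict i; exists x.
have [x x_new] := choice new.
have x_inj : injective x.
  move=> i j eq_x; apply/eqP; case: ltngtP => // [lt_ij|lt_ji]; exfalso.
    apply: (proj2 (x_new j)); rewrite -eq_x.
    by apply: (strict_chain_le lt_ij); case: (x_new i).
  apply: (proj2 (x_new i)); rewrite eq_x.
  by apply: (strict_chain_le lt_ji); case: (x_new j).
apply: (infinite_range_inj x_inj); apply: sub_finite_set finW => _ [i _ <-].
by have /contrapT AiW := AW i.+1; apply: AiW; case: (x_new i).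
Qed.

Lemma strict_chain_avoid (W : set X) i : finite_set W ->
  exists j x, (i <= j)%N /\ A j x /\ ~ W x.
Proof.
move=> /strict_chain_escape[j /nonsubset[x [Ajx nWx]]].
exists (maxn i j), x; split; first exact: leq_maxl.
by split=> //; apply: (strict_chain_le (leq_maxr i j)).
Qed.

End StrictChain.

Section ChainConditions.
Variables (S T : choiceType) (pi : S -> T -> bool).
Hypothesis Bs_finite : forall s, finite_set (Bs pi s).

Lemma half_graph_injective (s : nat -> S) (t : nat -> T) :
  (forall i j, pi (s i) (t j) <-> (j <= i)%N) -> injective s /\ injective t.
Proof.
move=> half; split=> i j eq_ij; apply/eqP; rewrite eqn_leq; apply/andP; split.
- by apply/(half j i); rewrite -eq_ij; apply/half.
- by apply/(half i j); rewrite eq_ij; apply/half.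
- by apply/(half j i); rewrite eq_ij; apply/half.
- by apply/(half i j); rewrite -eq_ij; apply/half.
Qed.

Lemma ascending_union_closed_no_chain :
  ascending_union_closed (B1down pi) -> no_strict_ascending_chain (B1down pi).
Proof.
move=> AUC [A [AD A_strict]].
have [s Us] := AUC A AD (fun i => properW (A_strict i)).
have [i nsub] := strict_chain_escape A_strict (Bs_finite s).
by apply: nsub => x Aix; apply: Us; exists i.
Qed.

(* Pick t_n in A_(i_n), with i_n nondecreasing, outside the B_(s_m) (m < n) of
   the rows chosen so far, and let s_n be a row containing A_(i_n): then
   pi (s_m) (t_n) holds iff n <= m. *)
Lemma LNG_free_no_chain : LNG_free pi -> no_strict_ascending_chain (B1down pi).
Proof.
move=> LNG [A [AD A_strict]]; apply: LNG.
have [sigma A_sigma] := choice AD.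
pose W (h : seq (nat * T)) := \bigcup_(y in [set` h]) Bs pi (sigma y.1).
have [f f_next] : exists f : nat -> nat * T, forall n,
    (forall y, y \in mkseq f n -> (y.1 <= (f n).1)%N) /\
    A (f n).1 (f n).2 /\ ~ W (mkseq f n) (f n).2.
  apply: (history_choice (P := fun h x => (forall y, y \in h -> (y.1 <= x.1)%N) /\
    A x.1 x.2 /\ ~ W h x.2)) => h.
  have finW : finite_set (W h) by apply: bigcup_finite => // y _.
  have [j [x [le_hj [Ajx nWx]]]] :=
    strict_chain_avoid A_strict (\max_(y <- h) y.1) finW.
  exists (j, x); split => // y hy; apply: leq_trans le_hj.
  exact: leq_bigmax_seq.
have f_prev a b : (a < b)%N -> f a \in mkseq f b.
  by move=> lt_ab; apply: map_f; rewrite mem_iota.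
pose s n := sigma (f n).1; pose t n := (f n).2.
have half i j : pi (s i) (t j) <-> (j <= i)%N.
  split=> [pij|le_ji].
    rewrite leqNgt; apply/negP => /f_prev fi_prev.
    by apply: (proj2 (proj2 (f_next j))); exists (f i).
  apply: A_sigma; apply: (strict_chain_le A_strict _ (proj1 (proj2 (f_next j)))).
  move: le_ji; rewrite leq_eqVlt => /orP[/eqP->//|/f_prev].
  exact: (proj1 (f_next i)).
have [s_inj t_inj] := half_graph_injective half.
by exists s, t.
Qed.

End ChainConditions.

Section NoChain.
Variables (T : Type) (D : set (set T)).
Hypothesis D_nochain : no_strict_ascending_chain D.

Lemma no_chain_extensible (P : set (set T)) : P `<=` D ->
  (forall A, P A -> exists2 B, P B & A `<` B) -> forall A, ~ P A.
Proof.
move=> PD Pext A0 PA0.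
have ext A : exists B, P A -> P B /\ A `<` B.
  by have [/Pext[B PB AB]|nPA] := pselect (P A); [exists B | exists A => /nPA].
have [next Pnext] := choice ext.
have P_iter n : P (iter n next A0) by elim: n => //= n /Pnext[].
apply: D_nochain; exists (fun n => iter n next A0); split=> n; first exact/PD.
by have [] := Pnext _ (P_iter n).
Qed.

Definition strict_extension (B A : set T) := D B /\ A `<` B.

Lemma strict_extension_wf : well_founded strict_extension.
Proof.
have noP := @no_chain_extensible [set A | D A /\ ~ Acc strict_extension A].
move=> A; constructor=> B [DB _]; apply: contrapT => nAccB.
apply: (noP _ _ B) => // [C []//|C [_ nAccC]].
have [E [DE CE] nAccE] : exists2 E, strict_extension E C & ~ Acc strict_extension E.
  apply: contrapT => noE; apply: nAccC; constructor=> E CE.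
  by apply: contrapT => nAccE; apply: noE; exists E.
by exists E.
Qed.

End NoChain.

Section FamilyLift.
Variables (X : eqType) (r : X -> X -> Prop).

(* Without nonemptiness [set0] would be related to itself. *)
Definition lift_rel (G F : set X) :=
  [/\ finite_set G, G !=set0 & forall C, G C -> exists2 A, F A & r C A].

Lemma Acc_lift_sub G F : G `<=` F -> Acc lift_rel F -> Acc lift_rel G.
Proof.
move=> GF AccF; constructor=> H [finH neH Hr]; apply: (Acc_inv AccF).
by split=> // C /Hr[A /GF FA rCA]; exists A.
Qed.

Lemma Acc_lift_set0 : Acc lift_rel set0.
Proof. by constructor=> G [_ [C GC] /(_ C GC)[]]. Qed.

Lemma Acc_lift_improper G F : (forall H, lift_rel H F -> Acc lift_rel H) ->
  finite_set G -> (forall C, G C -> exists2 A, F A & r C A) -> Acc lift_rel G.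
Proof.
move=> AccF finG Gr; have [->|/set0P neG] := eqVneq G set0.
  exact: Acc_lift_set0.
exact: AccF.
Qed.

Lemma Acc_liftU F1 F2 :
  Acc lift_rel F1 -> Acc lift_rel F2 -> Acc lift_rel (F1 `|` F2).
Proof.
move=> AccF1; elim: AccF1 F2 => {}F1 _ IH1 F2 AccF2.
constructor=> G [finG neG Gr].
have [G1 [G1G G1r G2r]] : exists G1, [/\ G1 `<=` G,
    forall C, G1 C -> exists2 A, F1 A & r C A &
    forall C, (G `\` G1) C -> exists2 A, F2 A & r C A].
  exists (G `&` [set C | exists2 A, F1 A & r C A]).
  split=> [C []//|C []//|C [/[dup] GC /Gr[A [F1A|F2A] rCA] nG1C]]; last by exists A.
  by exfalso; apply: nG1C; split=> //; exists A.
have AccG2 : Acc lift_rel (G `\` G1).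
  exact: (Acc_lift_improper (Acc_inv AccF2) (finite_setD _ finG)).
apply: (@Acc_lift_sub _ (G1 `|` (G `\` G1))); first by rewrite setDUK.
have [G1_0|/eqP/set0P neG1] := pselect (G1 = set0).
  by rewrite {1}G1_0 set0U; exact: AccG2.
by apply: (IH1 G1 _ _ AccG2); split=> //; exact: sub_finite_set finG.
Qed.

Lemma Acc_lift_finite F : finite_set F ->
  (forall A, F A -> Acc lift_rel [set A]) -> Acc lift_rel F.
Proof.
move=> /finite_seqP[s ->]; elim: s => [|A s IHs] Acc1.
  rewrite (_ : [set` [::]] = set0); first exact: Acc_lift_set0.
  by apply/seteqP; split.
have -> : [set` A :: s] = [set A] `|` [set` s].
  apply/seteqP; split=> C /=; rewrite inE.
    by case/orP=> [/eqP->|sC]; [left|right].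
  by case=> [->|->]; rewrite ?eqxx ?orbT.
apply: Acc_liftU; first by apply: Acc1; rewrite /= mem_head.
by apply: IHs => C sC; apply: Acc1; rewrite /= inE sC orbT.
Qed.

Lemma Acc_lift1 A : Acc r A -> Acc lift_rel [set A].
Proof.
elim=> {}A _ IH; constructor=> G [finG _ Gr].
by apply: (Acc_lift_finite finG) => C /Gr[_ -> rCA]; apply: IH.
Qed.

End FamilyLift.

Section Mass.
Context {R : realType}.
Local Open Scope ereal_scope.
Variable X : choiceType.
Implicit Types (q : X -> R) (A B : set X).

Definition mass q B : \bar R := \esum_(x in B) (q x)%:E.

Definition prob q := (forall x, 0 <= q x)%R /\ mass q setT = 1.

Lemma Dist_prob q : Dist q -> prob q.
Proof. by case=> q0 [_ q1]. Qed.

Lemma mass_ge0 q B : (forall x, 0 <= q x)%R -> 0 <= mass q B.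
Proof. by move=> q0; apply: esum_ge0 => x _; rewrite lee_fin. Qed.

Lemma le_mass q A B : (forall x, 0 <= q x)%R -> A `<=` B -> mass q A <= mass q B.
Proof.
move=> q0 AB; rewrite /mass esum_mkcond [leRHS]esum_mkcond.
apply: le_esum => x _; case: ifPn => [/set_mem/AB/mem_set->//|_].
by case: ifP; rewrite lee_fin.
Qed.

Lemma massID q A B : (forall x, 0 <= q x)%R ->
  mass q B = mass q (B `&` A) + mass q (B `&` ~` A).
Proof. by move=> q0; apply: esumID => x _; rewrite lee_fin. Qed.

Lemma massD q1 q2 B : (forall x, 0 <= q1 x)%R -> (forall x, 0 <= q2 x)%R ->
  mass (fun x => q1 x + q2 x)%R B = mass q1 B + mass q2 B.
Proof.
by move=> q10 q20; rewrite /mass -esumD // => x _; rewrite ?EFinD ?lee_fin.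
Qed.

Lemma massZ q r B : (forall x, 0 <= q x)%R -> (0 <= r)%R ->
  mass (fun x => r * q x)%R B = r%:E * mass q B.
Proof.
by move=> q0 r0; rewrite /mass -esumZl // => [|x]; rewrite ?EFinM ?lee_fin.
Qed.

Lemma mass_eq0 q B : (forall x, B x -> q x = 0%R) -> mass q B = 0.
Proof. by move=> qB; apply: esum1 => x /qB ->. Qed.

(* Only meaningful when [q] is a probability: [fine] sends [+oo] to [0]. *)
Definition rmass q B : R := fine (mass q B).

Lemma rmassE q B : prob q -> (rmass q B)%:E = mass q B.
Proof.
move=> [q0 q1]; rewrite fineK // ge0_fin_numE ?mass_ge0 //.
by rewrite (le_lt_trans (le_mass q0 (@subsetT _ B))) // q1 ltry.
Qed.

Lemma rmass_ge0 q B : prob q -> (0 <= rmass q B)%R.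
Proof. by move=> qP; rewrite -lee_fin rmassE // mass_ge0 //; case: qP. Qed.

Lemma le_rmass q A B : prob q -> A `<=` B -> (rmass q A <= rmass q B)%R.
Proof. by move=> qP AB; rewrite -lee_fin !rmassE // le_mass //; case: qP. Qed.

Lemma rmass_le1 q B : prob q -> (rmass q B <= 1)%R.
Proof.
by move=> qP; rewrite -lee_fin rmassE // -(proj2 qP) le_mass //; case: qP.
Qed.

Lemma rmassID q A B : prob q ->
  rmass q B = (rmass q (B `&` A) + rmass q (B `&` ~` A))%R.
Proof.
by move=> qP; apply: EFin_inj; rewrite EFinD !rmassE // (massID A) //; case: qP.
Qed.

Lemma prob_tail q (d : R) : prob q -> (0 < d)%R ->
  exists2 F, finite_set F & (rmass q (~` F) < d)%R.
Proof.
move=> qP d0; have [_ q1] := qP.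
have : (1 - d)%:E < mass q setT by rewrite q1 lte_fin gtrDl oppr_lt0.
move=> /ereal_sup_gt[_ [F [finF _] <-] ltF]; exists F => //.
have : (1 - d)%:E < mass q F.
  by apply: lt_le_trans ltF _; apply: esum_ge; exists F => //; exact: fsets_self.
have := rmassID F setT qP; rewrite !setTI /rmass q1 -rmassE // lte_fin /=; lra.
Qed.

Definition dirac_pt (x : X) : X -> R := fun y => (y == x)%:R.

Lemma dirac_pt_ge0 x y : (0 <= dirac_pt x y)%R.
Proof. exact: ler0n. Qed.

Lemma esum_dirac_ptl x (f : X -> \bar R) B : (forall y, 0 <= f y) ->
  \esum_(y in B) ((dirac_pt x y)%:E * f y) = if `[< B x >] then f x else 0.
Proof.
move=> f0; rewrite (esumID [set x]) => [|y _]; last first.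
  by rewrite mule_ge0 // lee_fin dirac_pt_ge0.
rewrite [X in _ + X]esum1 ?adde0 => [|y [_ /eqP/negbTE yx]]; last first.
  by rewrite /dirac_pt yx mul0e.
case: asboolP => Bx.
  rewrite setIidr => [|_ -> //].
  rewrite esum_set1 ?mule_ge0 ?lee_fin ?dirac_pt_ge0 //.
  by rewrite /dirac_pt eqxx mul1e.
rewrite (_ : _ `&` _ = set0) ?esum_set0 //.
by rewrite -subset0 => y [By /= yx]; apply: Bx; rewrite -yx.
Qed.

Lemma mass_dirac_pt x B : mass (dirac_pt x) B = if `[< B x >] then 1 else 0.
Proof.
by rewrite -(@esum_dirac_ptl x (fun=> 1)) //; apply: eq_esum => y _; rewrite mule1.
Qed.

Lemma Dist_dirac_pt x : Dist (dirac_pt x).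
Proof.
split; first exact: dirac_pt_ge0.
split; last by have := mass_dirac_pt x setT; rewrite asboolT.
apply: finite_set_countable; apply: (sub_finite_set _ (finite_set1 x)) => y /=.
by rewrite /dirac_pt; case: (y =P x) => // _; rewrite eqxx.
Qed.

End Mass.

Section PiMix.
Variables (R : realType) (S T : choiceType) (pi : S -> T -> bool).
Local Open Scope ereal_scope.
Implicit Types (p : S -> R) (q : T -> R).

Lemma pimixE p q : (forall s, 0 <= p s)%R -> (forall t, 0 <= q t)%R ->
  pimix pi p q = \esum_(s in setT) (p s)%:E * mass q (Bs pi s).
Proof.
move=> p0 q0; rewrite /pimix.
have -> : [set: S * T] = [set: S] `*`` (fun=> [set: T]) by apply/seteqP; split.
rewrite -(esum_esum (a := fun s t => (p s * q t * (pi s t)%:R)%:E)); last first.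
  by move=> s t _ _; rewrite lee_fin !mulr_ge0.
apply: eq_esum => s _; rewrite /mass -esumZl //.
rewrite [RHS]esum_mkcond; apply: eq_esum => t _ /=.
rewrite (_ : (t \in Bs pi s) = pi s t); last by apply/idP/idP => [/set_mem|/mem_set].
by case: (pi s t); rewrite ?mulr1 ?mulr0 ?EFinM.
Qed.

Lemma pimix_ge0 p q : (forall s, 0 <= p s)%R -> (forall t, 0 <= q t)%R ->
  0 <= pimix pi p q.
Proof. by move=> p0 q0; apply: esum_ge0 => st _; rewrite lee_fin !mulr_ge0. Qed.

Lemma pimix_dirac_ptl s q : (forall t, 0 <= q t)%R ->
  pimix pi (dirac_pt s) q = mass q (Bs pi s).
Proof.
by move=> q0; rewrite pimixE // esum_dirac_ptl ?asboolT // => s'; apply: mass_ge0.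
Qed.

Lemma pimix_dirac_ptr p t : (forall s, 0 <= p s)%R ->
  pimix pi p (dirac_pt t) = mass p [set s | pi s t].
Proof.
move=> p0; rewrite pimixE //; under eq_esum do rewrite mass_dirac_pt.
rewrite /mass [RHS]esum_mkcond; apply: eq_esum => s _.
rewrite (_ : `[< Bs pi s t >] = (s \in [set s | pi s t])).
  by case: ifP; rewrite ?mule1 ?mule0.
by apply/idP/idP => [/asboolP/mem_set|/set_mem/asboolP].
Qed.

Lemma pimix_le p q (r : R) : prob p -> (forall t, 0 <= q t)%R -> (0 <= r)%R ->
  (forall s, mass q (Bs pi s) <= r%:E) -> pimix pi p q <= r%:E.
Proof.
move=> [p0 p1] q0 r0 qr; rewrite pimixE //.
apply: (@le_trans _ _ (\esum_(s in setT) (r%:E * (p s)%:E))).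
  apply: le_esum => s _; rewrite muleC.
  by apply: lee_wpmul2r => //; rewrite lee_fin.
by rewrite esumZl // -/(mass p setT) p1 mule1.
Qed.

End PiMix.

Section Replies.
Variables (R : realType) (S T : choiceType) (pi : S -> T -> bool).

Lemma pure_reply_small p (e : R) : prob p -> countably_infinite T ->
  (forall s, finite_set (Bs pi s)) -> 0 < e ->
  exists t, (mass p [set s | pi s t] <= e%:E)%E.
Proof.
move=> pP T_inf Bs_fin e_gt0; have [F finF tailF] := prob_tail pP e_gt0.
have [t nFt] : exists t, ~ (\bigcup_(s in F) Bs pi s) t.
  by apply: countably_infinite_avoid T_inf _; apply: bigcup_finite.
exists t; rewrite -rmassE // lee_fin; apply/ltW/(le_lt_trans _ tailF).
by apply: le_rmass => // s /= pst Fs; apply: nFt; exists s.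
Qed.

Variables (q : T -> R) (s0 : S).
Hypotheses (q_prob : prob q) (D_nochain : no_strict_ascending_chain (B1down pi)).

Let m := sup (range (fun s => rmass q (Bs pi s))).

Let has_sup_rmass : has_sup (range (fun s => rmass q (Bs pi s))).
Proof.
split; first by exists (rmass q (Bs pi s0)), s0.
by exists 1 => _ [s _ <-]; exact: rmass_le1.
Qed.

Definition approximable (A : set T) :=
  forall d, 0 < d -> exists s, A `<=` Bs pi s /\ m - d < rmass q (Bs pi s).

Lemma not_approximable_near A : ~ approximable A ->
  \forall d \near 0^'+, forall s, A `<=` Bs pi s -> rmass q (Bs pi s) <= m - d.
Proof.
move=> napxA.
have [d0 [d0_gt0 cap]] : exists d0, 0 < d0 /\
    forall s, A `<=` Bs pi s -> rmass q (Bs pi s) <= m - d0.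
  apply: contrapT => nocap; apply: napxA => d d_gt0; apply: contrapT => nos.
  apply: nocap; exists d; split=> // s As.
  by rewrite leNgt; apply/negP => lt; apply: nos; exists s.
near=> d => s /cap /le_trans; apply; rewrite lerD2l lerN2.
by near: d; exact: nbhs_right_le.
Unshelve. all: by end_near.
Qed.

(* A row approximating the supremum closely enough puts more mass outside [A]
   than [q] has outside a finite set [F], hence contains a point of [F \ A]. *)
Lemma approximable_extend A : (forall s, rmass q (Bs pi s) < m) ->
  approximable A -> exists2 B, approximable B & A `<` B.
Proof.
move=> lt_m apxA; apply: contrapT => noext.
have [s1 [As1 _]] := apxA 1 ltr01.
have r_gt0 : 0 < m - rmass q A.
  by rewrite subr_gt0; apply: le_lt_trans (le_rmass q_prob As1) (lt_m s1).
have [F finF tailF] := prob_tail q_prob (divr_gt0 r_gt0 (ltr0n _ 2)).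
have capped t : F t -> \forall d \near 0^'+, ~ A t ->
    forall s, A `|` [set t] `<=` Bs pi s -> rmass q (Bs pi s) <= m - d.
  move=> _; have [At|nAt] := pselect (A t); first by near=> d.
  have napxAt : ~ approximable (A `|` [set t]).
    move=> apxAt; apply: noext; exists (A `|` [set t]) => //.
    by split; [exact: subsetUl | move=> /(_ t (or_intror erefl))].
  by apply: filterS (not_approximable_near napxAt) => d cap _.
have capF := near_forall_finite finF capped.
near (0 : R)^'+ => d.
have d_gt0 : 0 < d by near: d; exact: nbhs_right_gt.
have [s [As lt_s]] := apxA d d_gt0.
have [t [[Bst nAt] Ft]] : exists t, (Bs pi s `&` ~` A) t /\ F t.
  apply: contrapT => no_t.
  have : rmass q (Bs pi s `&` ~` A) <= rmass q (~` F).
    by apply: le_rmass => // t Bt Ft; apply: no_t; exists t.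
  have : d <= (m - rmass q A) / 2.
    by near: d; apply: nbhs_right_le; rewrite divr_gt0.
  by move: lt_s; rewrite (rmassID A (Bs pi s)) // setIidr //; lra.
have cap_d : forall t, F t -> ~ A t ->
    forall s, A `|` [set t] `<=` Bs pi s -> rmass q (Bs pi s) <= m - d.
  by near: d; exact: capF.
have tB : [set t] `<=` Bs pi s by move=> _ ->.
by have := cap_d t Ft nAt s; rewrite subUset => /(_ (conj As tB)); lra.
Unshelve. all: by end_near.
Qed.

Lemma best_reply_exists : exists s1, forall s,
  (mass q (Bs pi s) <= mass q (Bs pi s1))%E.
Proof.
have ub s : rmass q (Bs pi s) <= m.
  by apply: sup_upper_bound has_sup_rmass _ _; exists s.
have [[s1 ge_s1]|no_best] := pselect (exists s1, m <= rmass q (Bs pi s1)).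
  by exists s1 => s; rewrite -!rmassE // lee_fin; exact: le_trans (ub s) ge_s1.
have lt_m s : rmass q (Bs pi s) < m.
  by rewrite ltNge; apply/negP => ?; apply: no_best; exists s.
exfalso; apply: (no_chain_extensible D_nochain (P := approximable) _
  (fun A => approximable_extend lt_m (A := A)) (A := set0)).
  by move=> A /(_ 1 ltr01)[s [As _]]; exists s.
move=> d d_gt0; have [_ [s _ <-] lt] := sup_adherent d_gt0 has_sup_rmass.
by exists s; split.
Qed.

End Replies.

Section Spread.
Variables (R : realType) (T : choiceType) (D : set (set T)).
Hypotheses (T_inf : countably_infinite T)
  (D_hered : forall A B, D B -> A `<=` B -> D A)
  (D_nochain : no_strict_ascending_chain D).

Definition finitely_supported (q : T -> R) (U : set T) :=
  [/\ forall t, 0 <= q t, finite_set U & forall t, q t != 0 -> U t].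

(* Keeping the support outside [G], a superset of every member of [F], makes
   each support point a genuinely new point for all members of [F]. *)
Definition spreadable (F : set (set T)) := forall e : R, 0 < e ->
  forall G, finite_set G -> (forall A, F A -> A `<=` G) ->
  exists q U, [/\ finitely_supported q U, mass q setT = 1%E,
    forall t, U t -> ~ G t &
    forall A B, F A -> D B -> A `<=` B -> (mass q B <= e%:E)%E].

Lemma spreadable_empty F : (forall A, ~ F A) -> spreadable F.
Proof.
move=> noF e _ G finG _; have [t nGt] := countably_infinite_avoid T_inf finG.
exists (dirac_pt t), [set t]; split=> [||_ ->//|A B /noF//].
- split; [exact: dirac_pt_ge0 | exact: finite_set1 |] => u.
  by rewrite /dirac_pt; case: (u =P t) => // _; rewrite eqxx.
- by rewrite mass_dirac_pt asboolT.
Qed.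

Definition point_extensions (F : set (set T)) (U : set T) := [set C | exists A t,
  [/\ F A, U t, ~ A t, D (A `|` [set t]) & C = A `|` [set t]]].

Lemma spreadable_point_extensions F U : finite_set F -> finite_set U ->
  (forall F', lift_rel (strict_extension D) F' F -> spreadable F') ->
  spreadable (point_extensions F U).
Proof.
move=> finF finU IH; have [[C FC]|noC] := pselect (exists C, point_extensions F U C).
  apply: IH; split; last 1 first.
  - move=> _ [A [t [FA _ nAt DAt ->]]]; exists A => //; split=> //.
    by split; [exact: subsetUl | move=> /(_ t (or_intror erefl))].
  - apply: sub_finite_set (finite_image2 (fun A t => A `|` [set t]) finF finU).
    by move=> _ [A [t [FA Ut _ _ ->]]]; exists A => //; exists t.
  - by exists C.
by apply: spreadable_empty => C FC; apply: noC; exists C.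
Qed.

Section Layers.
Variables (F : set (set T)) (G : set T) (e : R).
Hypotheses (ext_spread : forall U, finite_set U -> spreadable (point_extensions F U))
  (G_fin : finite_set G) (FG : forall A, F A -> A `<=` G) (e_gt0 : 0 < e).

Definition layers n (Q : T -> R) (U : set T) :=
  [/\ finitely_supported Q U, mass Q setT = (n%:R)%:E,
    forall t, U t -> ~ G t &
    forall A B, F A -> D B -> A `<=` B -> (mass Q B <= (1 + n%:R * e)%:E)%E].

(* A set of [D] containing a member [A] of [F] and meeting the old support at
   [t] contains the extension [A `|` [set t]], so the new layer gives it mass at
   most [e]; otherwise the old layers give it mass [0] and the new one at most 1. *)
Lemma layers_step n Q U : layers n Q U ->
  exists Q' U', layers n.+1 Q' U'.
Proof.
move=> [[Q0 finU QU] QT UG QB].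
have GU_fin : finite_set (G `|` U) by rewrite finite_setU.
have FGU C : point_extensions F U C -> C `<=` G `|` U.
  move=> [A [t [FA Ut _ _ ->]]]; rewrite subUset; split; last by move=> _ ->; right.
  by apply: subset_trans (FG FA) _; exact: subsetUl.
have [q [V [[q0 finV qV] qT VG qB]]] := ext_spread finU e_gt0 GU_fin FGU.
exists (fun t => Q t + q t), (U `|` V); split.
- split=> [t||t]; first by rewrite addr_ge0.
    by rewrite finite_setU.
  have [/eqP Qt0|/QU Ut _] := boolP (Q t == 0); last by left.
  by rewrite Qt0 add0r => /qV; right.
- by rewrite massD // QT qT -EFinD natr1.
- by move=> t [/UG|/VG nGUt Gt]; last by apply: nGUt; left.
move=> A B FA DB AB; rewrite massD //.
have [[t [Bt Qt]]|noQ] := pselect (exists t, B t /\ Q t != 0).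
  have nAt : ~ A t by move=> At; apply: UG (QU t Qt) _; exact: FG FA t At.
  have AtB : A `|` [set t] `<=` B by rewrite subUset; split=> // _ ->.
  have FAt : point_extensions F U (A `|` [set t]).
    by exists A, t; split=> //; [exact: QU | exact: D_hered AtB].
  apply: le_trans (leeD (QB A B FA DB AB) (qB _ _ FAt DB AtB)) _.
  by rewrite -EFinD lee_fin -natr1 mulrDl mul1r addrA.
rewrite mass_eq0 ?add0e => [|t Bt]; last first.
  by apply: contrapT => /eqP Qt; apply: noQ; exists t.
rewrite -rmassE ?lee_fin; last by split.
by apply: le_trans (rmass_le1 _ (conj q0 qT)) _; rewrite lerDl mulr_ge0 // ltW.
Qed.

Lemma layers_exist n : exists Q U, layers n Q U.
Proof.
elim: n => [|n [Q [U /layers_step//]]].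
exists (fun=> 0), set0; split=> //.
- by split=> // t; rewrite eqxx.
- by rewrite mass_eq0.
- by move=> A B _ _ _; rewrite mass_eq0 // mul0r addr0 lee_fin.
Qed.

End Layers.

Lemma spreadable_step F : finite_set F ->
  (forall F', lift_rel (strict_extension D) F' F -> spreadable F') -> spreadable F.
Proof.
move=> finF IH e e_gt0 G finG FG.
have e2_gt0 : 0 < e / 2 by rewrite divr_gt0.
pose N := (Num.trunc (2 / e)).+1.
have N_gt0 : 0 < N%:R :> R by rewrite ltr0Sn.
have Ninv_gt0 : 0 < N%:R^-1 :> R by rewrite invr_gt0.
have [Q [U [[Q0 finU QU] QT UG QB]]] :=
  layers_exist (fun U finU => spreadable_point_extensions finF finU IH)
    finG FG e2_gt0 N.
exists (fun t => N%:R^-1 * Q t), U; split=> //.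
- split=> [t|//|t]; first by rewrite mulr_ge0 // ltW.
  by rewrite mulf_eq0 negb_or => /andP[_ /QU].
- by rewrite (massZ _ Q0 (ltW Ninv_gt0)) QT -EFinM mulVf ?gt_eqF.
move=> A B FA DB AB; rewrite (massZ _ Q0 (ltW Ninv_gt0)).
apply: (@le_trans _ _ ((N%:R^-1)%R%:E * (1 + N%:R * (e / 2))%R%:E)%E).
  by apply: lee_wpmul2l; [rewrite lee_fin; exact: ltW | exact: QB A B FA DB AB].
have Ninv_le : N%:R^-1 <= e / 2.
  by rewrite invf_ple ?posrE // invf_div ltW // truncnS_gt.
by rewrite -EFinM lee_fin mulrDr mulr1 mulKf ?gt_eqF //; lra.
Qed.

Lemma spreadable_finite F : finite_set F -> spreadable F.
Proof.
move=> finF; have : Acc (lift_rel (strict_extension D)) F.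
  apply: (Acc_lift_finite finF) => A _; apply: Acc_lift1.
  exact: strict_extension_wf D_nochain A.
move=> AccF; elim: AccF finF => {}F _ IH finF.
by apply: (spreadable_step finF) => F' F'F; apply: (IH F' F'F); case: F'F.
Qed.

Lemma spread_mass (e : R) : 0 < e ->
  exists2 q, Dist q & forall B, D B -> (mass q B <= e%:E)%E.
Proof.
move=> e_gt0; have FG (A : set T) : [set set0] A -> A `<=` set0 by move=> ->.
have [q [U [[q0 finU qU] qT _ qB]]] :=
  spreadable_finite (finite_set1 set0) e_gt0 (finite_set0 T) FG.
exists q; last by move=> B DB; apply: qB DB (sub0set B).
split=> //; split=> //; apply: finite_set_countable; exact: sub_finite_set finU.
Qed.

End Spread.

Section Game.
Variables (R : realType) (S T : choiceType) (pi : S -> T -> bool) (s0 : S).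
Hypotheses (T_inf : countably_infinite T)
  (Bs_finite : forall s, finite_set (Bs pi s))
  (D_nochain : no_strict_ascending_chain (B1down pi)).
Local Open Scope ereal_scope.

Lemma B1down_hered A B : B1down pi B -> A `<=` B -> B1down pi A.
Proof. by move=> [s Bs] AB; exists s; exact: subset_trans Bs. Qed.

Lemma inf_pimix_eq0 (p : S -> R) : Dist p ->
  ereal_inf [set pimix pi p q | q in @Dist R T] = 0.
Proof.
move=> /Dist_prob pP; have p0 := proj1 pP; apply/eqP; rewrite eq_le; apply/andP; split.
  apply/lee_addgt0Pr => e e_gt0; rewrite add0e.
  have [t pt] := pure_reply_small pP T_inf Bs_finite e_gt0.
  apply: le_trans pt; rewrite -pimix_dirac_ptr //.
  by apply: ereal_inf_lbound; exists (dirac_pt t) => //; exact: Dist_dirac_pt.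
by apply: le_ereal_inf_tmp => _ [q /Dist_prob[q0 _] <-]; exact: pimix_ge0.
Qed.

Lemma sup_pimix_attained (q : T -> R) : Dist q ->
  exists2 p0, Dist p0 & pimix pi p0 q = ereal_sup [set pimix pi p q | p in @Dist R S].
Proof.
move=> /Dist_prob qP; have q0 := proj1 qP.
have [s1 best] := best_reply_exists s0 qP D_nochain.
exists (dirac_pt s1); first exact: Dist_dirac_pt.
apply/eqP; rewrite eq_le; apply/andP; split.
  by apply: ereal_sup_ubound; exists (dirac_pt s1) => //; exact: Dist_dirac_pt.
apply: ge_ereal_sup => _ [p /Dist_prob pP <-].
rewrite pimix_dirac_ptl // -rmassE //.
by apply: pimix_le pP q0 (rmass_ge0 _ qP) _ => s; rewrite rmassE.
Qed.

Lemma inf_sup_pimix_eq0 :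
  ereal_inf [set ereal_sup [set pimix pi p q | p in @Dist R S] | q in @Dist R T] = 0.
Proof.
apply/eqP; rewrite eq_le; apply/andP; split.
  apply/lee_addgt0Pr => e e_gt0; rewrite add0e.
  have [q qD qB] := spread_mass T_inf B1down_hered D_nochain e_gt0.
  apply: le_trans (ereal_inf_lbound _) _; first by exists q.
  apply: ge_ereal_sup => _ [p /Dist_prob pP <-].
  apply: pimix_le pP (proj1 (Dist_prob qD)) (ltW e_gt0) _ => s.
  by apply: qB; exists s.
apply: le_ereal_inf_tmp => _ [q /Dist_prob[q0 _] <-].
apply: le_trans (ereal_sup_ubound _); last first.
  by exists (dirac_pt s0) => //; exact: Dist_dirac_pt.
exact: pimix_ge0 (dirac_pt_ge0 s0) q0.
Qed.

End Game.

Theorem corollary2p10 (R : realType) (S T : choiceType) (pi : S -> T -> bool) :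
  countably_infinite S -> countably_infinite T ->
  (forall s, finite_set (Bs pi s)) ->
  (ascending_union_closed (B1down pi) \/ no_strict_ascending_chain (B1down pi)
   \/ LNG_free pi) ->
  let val := fun p : S -> R =>
    ereal_inf [set pimix pi p q | q in @Dist R T] in
  let best := fun q : T -> R =>
    ereal_sup [set pimix pi p q | p in @Dist R S] in
  (exists2 p0, @Dist R S p0 & val p0 = ereal_sup [set val p | p in @Dist R S]) /\
  ereal_sup [set val p | p in @Dist R S] = 0%E /\
  (forall q, @Dist R T q -> exists2 p0, @Dist R S p0 & pimix pi p0 q = best q) /\
  ereal_inf [set best q | q in @Dist R T] = 0%E.
Proof.
move=> [f _] T_inf Bs_finite chain_cond val best; pose s0 := f 0%N.
have D_nochain : no_strict_ascending_chain (B1down pi).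
  case: chain_cond => [/(ascending_union_closed_no_chain Bs_finite)|[//|]] //.
  exact: LNG_free_no_chain.
have val0 p : Dist p -> val p = 0%E by exact: inf_pimix_eq0.
have sup_val0 : ereal_sup [set val p | p in @Dist R S] = 0%E.
  rewrite (_ : [set val p | p in @Dist R S] = [set 0%E]) ?ereal_sup1 //.
  apply/seteqP; split=> [_ [p pD <-]|_ ->] /=; first exact: val0.
  by exists (dirac_pt s0); [exact: Dist_dirac_pt | exact: val0 (Dist_dirac_pt s0)].
split; first by exists (dirac_pt s0); rewrite ?sup_val0 ?val0 //; exact: Dist_dirac_pt.
split=> //; split; first exact: sup_pimix_attained.
exact: inf_sup_pimix_eq0.
Qed.
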